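(* Let $p,a,b,c,d$ be real constants, $\varphi(x)=(x-a)(x-b)(x-c)(x-d)$, and on an open domain of $(\lambda^1,\lambda^2,\lambda^3)$ where it is defined and non-degenerate consider the metric $$ds^2=\Big(1+p\sqrt{\lambda^1\lambda^2\lambda^3}\Big)^{-2}\Big[\frac{(\lambda^1-\lambda^2)(\lambda^1-\lambda^3)}{\varphi(\lambda^1)}(d\lambda^1)^2+\frac{(\lambda^2-\lambda^1)(\lambda^2-\lambda^3)}{\varphi(\lambda^2)}(d\lambda^2)^2+\frac{(\lambda^3-\lambda^1)(\lambda^3-\lambda^2)}{\varphi(\lambda^3)}(d\lambda^3)^2\Big].$$ Then the off-diagonal components of its Ricci tensor (in the coordinates $\lambda^i$) vanish identically, and the diagonal components of its Ricci tensor vanish identically if and only if $$p\,abcd=0\quad\text{and}\quad p^2(abc+abd+acd+bcd)=1.$$ *)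

From Stdlib Require Import Reals.
From Coquelicot Require Import Coquelicot.
Open Scope R_scope.

(** Points of the coordinate space R^3, coordinates (lambda^1, lambda^2, lambda^3)
    indexed 0,1,2. *)
Definition pt := (R * R * R)%type.

Definition coord (k : nat) (x : pt) : R :=
  match k with
  | 0%nat => fst (fst x)
  | 1%nat => snd (fst x)
  | _ => snd x
  end.

Definition upd (k : nat) (x : pt) (t : R) : pt :=
  match k with
  | 0%nat => (t, snd (fst x), snd x)
  | 1%nat => (fst (fst x), t, snd x)
  | _ => (fst (fst x), snd (fst x), t)
  end.

Definition partial (k : nat) (f : pt -> R) (x : pt) : R :=
  Derive (fun t => f (upd k x t)) (coord k x).

Definition sum3 (f : nat -> R) : R := f 0%nat + f 1%nat + f 2%nat.

Definition metric := nat -> nat -> pt -> R.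

Definition m3 (i : nat) : nat := Nat.modulo i 3.

Definition det3 (g : metric) (x : pt) : R :=
  sum3 (fun j => g 0%nat j x *
     (g 1%nat (m3 (j+1)) x * g 2%nat (m3 (j+2)) x
      - g 1%nat (m3 (j+2)) x * g 2%nat (m3 (j+1)) x)).

(** inverse metric g^{ij} (cofactor formula for a 3x3 matrix) *)
Definition ginv (g : metric) (i j : nat) (x : pt) : R :=
  (g (m3 (j+1)) (m3 (i+1)) x * g (m3 (j+2)) (m3 (i+2)) x
   - g (m3 (j+1)) (m3 (i+2)) x * g (m3 (j+2)) (m3 (i+1)) x) / det3 g x.

Definition christoffel (g : metric) (k i j : nat) (x : pt) : R :=
  / 2 * sum3 (fun l => ginv g k l x *
     (partial i (g j l) x + partial j (g i l) x - partial l (g i j) x)).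

Definition ricci (g : metric) (i j : nat) (x : pt) : R :=
  sum3 (fun k => partial k (christoffel g k i j) x)
  - sum3 (fun k => partial j (christoffel g k i k) x)
  + sum3 (fun k => sum3 (fun l =>
        christoffel g k k l x * christoffel g l i j x
        - christoffel g k j l x * christoffel g l i k x)).

Definition phi (a b c d : R) (t : R) : R := (t - a) * (t - b) * (t - c) * (t - d).

Definition confactor (p : R) (x : pt) : R :=
  / (1 + p * sqrt (coord 0 x * coord 1 x * coord 2 x)) ^ 2.

Definition gmet (p a b c d : R) : metric :=
  fun i j x =>
    if Nat.eqb i j then
      confactor p x *
      ((coord i x - coord (m3 (i+1)) x) * (coord i x - coord (m3 (i+2)) x)
       / phi a b c d (coord i x))
    else 0.

Definition open3 (U : pt -> Prop) : Prop :=
  forall x, U x -> exists eps, 0 < eps /\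
    forall y, (forall k, (k < 3)%nat -> Rabs (coord k y - coord k x) < eps) -> U y.

Definition admissible (p a b c d : R) (U : pt -> Prop) : Prop :=
  open3 U /\ (exists x, U x) /\
  forall x, U x ->
    0 < coord 0 x * coord 1 x * coord 2 x /\
    1 + p * sqrt (coord 0 x * coord 1 x * coord 2 x) <> 0 /\
    (forall k, (k < 3)%nat -> phi a b c d (coord k x) <> 0) /\
    coord 0 x <> coord 1 x /\ coord 0 x <> coord 2 x /\ coord 1 x <> coord 2 x.

(* For a diagonal metric diag(h_0, h_1, h_2), the Christoffel symbols and the Ricci
   tensor are rational expressions in the h_i and their first and second partial
   derivatives.  Here h_i = Q^-2 (x_i - x_j) (x_i - x_k) / phi(x_i) with
   Q = 1 + p sqrt(x_0 x_1 x_2), whose derivatives follow from its logarithmic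
   derivative.  Substituting them, the off-diagonal components vanish identically,
   and R_ii = h_i * rho_i with
     rho_i = (p^2 e3 - 1)/2 - e4 T ((1 + T)/(4 V x_i) + (1 + 3T)/(4 V) (1/x_0 + 1/x_1 + 1/x_2)),
   where V = x_0 x_1 x_2, T = p sqrt V and e3, e4 are elementary symmetric functions
   of a, b, c, d.  The latter identity uses that phi is a monic quartic; this is
   made explicit by writing phi in Newton form.  Since rho_0 - rho_1 is a nonzero
   multiple of p e4, all rho_i vanish iff p e4 = 0 and p^2 e3 = 1. *)

From Stdlib Require Import Reals Lra Lia.
From Coquelicot Require Import Coquelicot.
Open Scope R_scope.
Set Bullet Behavior "Strict Subproofs".

Definition kdelta (i j : nat) : R := if Nat.eqb i j then 1 else 0.

Lemma upd_coord m y : (m < 3)%nat -> upd m y (coord m y) = y.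
Proof. intros Hm; destruct y as [[u v] w]; destruct m as [|[|[|m]]]; reflexivity || lia. Qed.

Lemma open3_locally_upd U x m : open3 U -> U x -> (m < 3)%nat ->
  locally (coord m x) (fun t => U (upd m x t)).
Proof.
  intros HU Hx Hm. destruct (HU x Hx) as [eps [Heps Hball]].
  exists (mkposreal eps Heps); intros t Ht; apply Hball; intros k Hk.
  change (Rabs (t - coord m x) < eps) in Ht.
  destruct x as [[u v] w]; destruct m as [|[|[|m]]], k as [|[|[|k]]]; try lia;
    cbn in *; rewrite ?Rminus_eq_0, ?Rabs_R0; lra.
Qed.

Lemma is_derive_eq (f : R -> R) (x l l' : R) : is_derive f x l -> l = l' -> is_derive f x l'.
Proof. intros H <-; exact H. Qed.

(** * Ricci tensor of a diagonal metric *)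

(* For a diagonal metric g, Gamma^k_ij = christoffel_num Dg k i j / (2 g_kk),
   where Dg m i stands for the partial derivative d_m g_ii. *)
Definition christoffel_num (Dg : nat -> nat -> pt -> R) (k i j : nat) (y : pt) : R :=
  kdelta j k * Dg i k y + kdelta i k * Dg j k y - kdelta i j * Dg k i y.

Definition christoffel_diag (g : metric) Dg (k i j : nat) (y : pt) : R :=
  christoffel_num Dg k i j y / (2 * g k k y).

Definition christoffel_diag_deriv (g : metric) Dg (DDg : nat -> nat -> nat -> pt -> R)
    (m k i j : nat) (y : pt) : R :=
  (christoffel_num (DDg m) k i j y * (2 * g k k y)
   - christoffel_num Dg k i j y * (2 * Dg m k y)) / (2 * g k k y) ^ 2.

Definition ricci_diag (g : metric) Dg DDg (i j : nat) (y : pt) : R :=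
  sum3 (fun k => christoffel_diag_deriv g Dg DDg k k i j y)
  - sum3 (fun k => christoffel_diag_deriv g Dg DDg j k i k y)
  + sum3 (fun k => sum3 (fun l =>
        christoffel_diag g Dg k k l y * christoffel_diag g Dg l i j y
        - christoffel_diag g Dg k j l y * christoffel_diag g Dg l i k y)).

Section DiagonalMetric.

Variables (g : metric) (Dg : nat -> nat -> pt -> R)
  (DDg : nat -> nat -> nat -> pt -> R) (U : pt -> Prop).

Hypothesis U_open : open3 U.
Hypothesis g_offdiag : forall i j y, i <> j -> g i j y = 0.
Hypothesis g_diag_neq0 : forall y, U y -> forall i, (i < 3)%nat -> g i i y <> 0.
Hypothesis is_derive_g : forall y, U y -> forall m i, (m < 3)%nat -> (i < 3)%nat ->
  is_derive (fun t => g i i (upd m y t)) (coord m y) (Dg m i y).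
Hypothesis is_derive_Dg : forall y, U y -> forall m n i,
  (m < 3)%nat -> (n < 3)%nat -> (i < 3)%nat ->
  is_derive (fun t => Dg n i (upd m y t)) (coord m y) (DDg m n i y).

Lemma partial_diag_metric l i j y : U y -> (l < 3)%nat -> (i < 3)%nat -> (j < 3)%nat ->
  partial l (g i j) y = kdelta i j * Dg l i y.
Proof.
  intros Hy Hl Hi Hj; unfold partial, kdelta.
  destruct (Nat.eqb_spec i j) as [<- | Hij].
  - rewrite Rmult_1_l; exact (is_derive_unique _ _ _ (is_derive_g y Hy l i Hl Hi)).
  - rewrite Rmult_0_l, (Derive_ext _ (fun _ => 0)); [apply Derive_const|].
    intros t; exact (g_offdiag i j _ Hij).
Qed.

Lemma christoffel_diagE k i j y : U y -> (k < 3)%nat -> (i < 3)%nat -> (j < 3)%nat ->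
  christoffel g k i j y = christoffel_diag g Dg k i j y.
Proof.
  intros Hy Hk Hi Hj.
  pose proof (g_diag_neq0 y Hy 0 ltac:(lia)).
  pose proof (g_diag_neq0 y Hy 1 ltac:(lia)).
  pose proof (g_diag_neq0 y Hy 2 ltac:(lia)).
  unfold christoffel, christoffel_diag, christoffel_num, ginv, det3, sum3.
  rewrite !partial_diag_metric by (try assumption; lia).
  destruct k as [|[|[|k]]], i as [|[|[|i]]], j as [|[|[|j]]]; try lia;
    cbn; unfold kdelta; cbn;
    repeat match goal with |- context [g ?i ?j ?z] =>
      rewrite (g_offdiag i j z) by discriminate end;
    field; auto.
Qed.

Lemma partial_christoffel_diagE m k i j y :
  U y -> (m < 3)%nat -> (k < 3)%nat -> (i < 3)%nat -> (j < 3)%nat ->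
  partial m (christoffel g k i j) y = christoffel_diag_deriv g Dg DDg m k i j y.
Proof.
  intros Hy Hm Hk Hi Hj; unfold partial; apply is_derive_unique.
  apply (is_derive_ext_loc (fun t => christoffel_diag g Dg k i j (upd m y t))).
  { apply (filter_imp (fun t => U (upd m y t))).
    - intros t Ht; symmetry; apply christoffel_diagE; assumption.
    - exact (open3_locally_upd U y m U_open Hy Hm). }
  assert (Dnum : is_derive (fun t => christoffel_num Dg k i j (upd m y t)) (coord m y)
      (christoffel_num (DDg m) k i j y)).
  { unfold christoffel_num.
    apply (is_derive_minus (V := R_NormedModule));
      [apply (is_derive_plus (V := R_NormedModule))|];
      apply is_derive_scal; apply is_derive_Dg; assumption. }
  assert (Dden : is_derive (fun t => 2 * g k k (upd m y t)) (coord m y) (2 * Dg m k y)).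
  { apply is_derive_scal; apply is_derive_g; assumption. }
  pose proof (is_derive_div _ _ _ _ _ Dnum Dden) as D.
  cbv beta in D; rewrite upd_coord in D by assumption; apply D.
  apply Rmult_integral_contrapositive_currified; [lra | apply g_diag_neq0; assumption].
Qed.

Lemma ricci_diagE i j y : U y -> (i < 3)%nat -> (j < 3)%nat ->
  ricci g i j y = ricci_diag g Dg DDg i j y.
Proof.
  intros Hy Hi Hj; unfold ricci, ricci_diag, sum3.
  rewrite !partial_christoffel_diagE, !christoffel_diagE by (assumption || lia).
  reflexivity.
Qed.

End DiagonalMetric.

Ltac nonzero :=
  repeat split; repeat apply Rmult_integral_contrapositive_currified;
  first [assumption | lra | apply pow_nonzero; assumption].

Ltac derive_from_hyps :=
  auto_derive;
  [ repeat split; try (eexists; eassumption); try nonzero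
  | repeat match goal with
    | H : is_derive ?f ?x ?l |- context [Derive ?f' ?x] =>
        replace (Derive f' x) with l by (symmetry; exact (is_derive_unique f x l H))
    end; field; nonzero ].

Lemma is_derive_conformal_entry (F S X Y Z : R -> R) (p x dF dS dX dY dZ : R) :
  is_derive F (X x) dF -> is_derive S x dS ->
  is_derive X x dX -> is_derive Y x dY -> is_derive Z x dZ ->
  F (X x) <> 0 -> 1 + p * S x <> 0 -> X x - Y x <> 0 -> X x - Z x <> 0 ->
  is_derive (fun t => / (1 + p * S t) ^ 2 * ((X t - Y t) * (X t - Z t) / F (X t))) x
    (/ (1 + p * S x) ^ 2 * ((X x - Y x) * (X x - Z x) / F (X x)) *
     (- 2 * p * dS / (1 + p * S x) + (dX - dY) / (X x - Y x) + (dX - dZ) / (X x - Z x)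
      - dX * dF / F (X x))).
Proof. intros; derive_from_hyps. Qed.

Lemma is_derive_conformal_dlog (S X : R -> R) (p x dS dX : R) :
  is_derive S x dS -> is_derive X x dX -> X x <> 0 -> 1 + p * S x <> 0 ->
  is_derive (fun t => - (p * S t) / (X t * (1 + p * S t))) x
    (- (p * dS) / (X x * (1 + p * S x) ^ 2) + p * S x * dX / (X x ^ 2 * (1 + p * S x))).
Proof. intros; derive_from_hyps. Qed.

Lemma is_derive_inv_diff (X Y : R -> R) (c x dX dY : R) :
  is_derive X x dX -> is_derive Y x dY -> X x - Y x <> 0 ->
  is_derive (fun t => c / (X t - Y t)) x (- (c * (dX - dY)) / (X x - Y x) ^ 2).
Proof. intros; derive_from_hyps. Qed.

Lemma is_derive_ratio_comp (F G X : R -> R) (x dF dG dX : R) :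
  is_derive F (X x) dF -> is_derive G (X x) dG -> is_derive X x dX -> F (X x) <> 0 ->
  is_derive (fun t => G (X t) / F (X t)) x
    (dX * (dG / F (X x) - G (X x) * dF / F (X x) ^ 2)).
Proof. intros; derive_from_hyps. Qed.

Definition vol (y : pt) : R := coord 0 y * coord 1 y * coord 2 y.

Definition sqrtvol (y : pt) : R := sqrt (vol y).

Lemma is_derive_coord_upd k m y : (k < 3)%nat -> (m < 3)%nat ->
  is_derive (fun t => coord k (upd m y t)) (coord m y) (kdelta k m).
Proof.
  intros Hk Hm; destruct y as [[u v] w];
    destruct k as [|[|[|k]]], m as [|[|[|m]]]; try lia;
    unfold kdelta; cbn; auto_derive; auto.
Qed.

Lemma is_derive_sqrtvol m y : (m < 3)%nat -> 0 < vol y ->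
  is_derive (fun t => sqrtvol (upd m y t)) (coord m y) (sqrtvol y / (2 * coord m y)).
Proof.
  intros Hm Hy; destruct y as [[u v] w]; unfold sqrtvol, vol in *; cbn in *.
  assert (Hs : sqrt (u * v * w) * sqrt (u * v * w) = u * v * w) by (apply sqrt_sqrt; lra).
  assert (Hs0 : 0 < sqrt (u * v * w)) by (apply sqrt_lt_R0; lra).
  destruct m as [|[|[|m]]]; try lia; cbn; auto_derive; try lra;
    field_simplify_eq; nra.
Qed.

Definition phi' (a b c d t : R) : R :=
  (t - b) * (t - c) * (t - d) + (t - a) * (t - c) * (t - d)
  + (t - a) * (t - b) * (t - d) + (t - a) * (t - b) * (t - c).

Definition phi'' (a b c d t : R) : R :=
  2 * ((t - c) * (t - d) + (t - b) * (t - d) + (t - b) * (t - c)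
       + (t - a) * (t - d) + (t - a) * (t - c) + (t - a) * (t - b)).

Lemma is_derive_phi a b c d t : is_derive (phi a b c d) t (phi' a b c d t).
Proof. unfold phi, phi'; auto_derive; [exact I | ring]. Qed.

Lemma is_derive_phi' a b c d t : is_derive (phi' a b c d) t (phi'' a b c d t).
Proof. unfold phi', phi''; auto_derive; [exact I | ring]. Qed.

Definition regular_point (p a b c d : R) (x : pt) : Prop :=
  0 < vol x /\ 1 + p * sqrtvol x <> 0 /\
  (forall k, (k < 3)%nat -> phi a b c d (coord k x) <> 0) /\
  coord 0 x <> coord 1 x /\ coord 0 x <> coord 2 x /\ coord 1 x <> coord 2 x.

Lemma admissible_regular p a b c d U x :
  admissible p a b c d U -> U x -> regular_point p a b c d x.
Proof. intros (_ & _ & Hreg) Hx; exact (Hreg x Hx). Qed.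

Section Metric.

Variables p a b c d : R.

Definition dlog_conf (m : nat) (y : pt) : R :=
  - (p * sqrtvol y) / (coord m y * (1 + p * sqrtvol y)).

Definition dlog_diff (m i : nat) (y : pt) : R :=
  (kdelta i m - kdelta (m3 (i + 1)) m) / (coord i y - coord (m3 (i + 1)) y)
  + (kdelta i m - kdelta (m3 (i + 2)) m) / (coord i y - coord (m3 (i + 2)) y).

Definition dlog_phi (i : nat) (y : pt) : R :=
  phi' a b c d (coord i y) / phi a b c d (coord i y).

Definition dlog_gmet (m i : nat) (y : pt) : R :=
  dlog_conf m y + dlog_diff m i y - kdelta i m * dlog_phi i y.

Definition ddlog_conf (m n : nat) (y : pt) : R :=
  - (p * sqrtvol y) / (2 * coord m y * coord n y * (1 + p * sqrtvol y) ^ 2)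
  + kdelta n m * (p * sqrtvol y) / (coord n y ^ 2 * (1 + p * sqrtvol y)).

Definition ddlog_diff (m n i : nat) (y : pt) : R :=
  - ((kdelta i n - kdelta (m3 (i + 1)) n) * (kdelta i m - kdelta (m3 (i + 1)) m))
    / (coord i y - coord (m3 (i + 1)) y) ^ 2
  - (kdelta i n - kdelta (m3 (i + 2)) n) * (kdelta i m - kdelta (m3 (i + 2)) m)
    / (coord i y - coord (m3 (i + 2)) y) ^ 2.

Definition ddlog_phi (i : nat) (y : pt) : R :=
  phi'' a b c d (coord i y) / phi a b c d (coord i y) - dlog_phi i y ^ 2.

Definition ddlog_gmet (m n i : nat) (y : pt) : R :=
  ddlog_conf m n y + ddlog_diff m n i y - kdelta i n * (kdelta i m * ddlog_phi i y).

Definition dgmet (m i : nat) (y : pt) : R :=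
  gmet p a b c d i i y * dlog_gmet m i y.

Definition ddgmet (m n i : nat) (y : pt) : R :=
  gmet p a b c d i i y * (dlog_gmet m i y * dlog_gmet n i y + ddlog_gmet m n i y).

Lemma gmet_diagE i y :
  gmet p a b c d i i y = / (1 + p * sqrtvol y) ^ 2 *
    ((coord i y - coord (m3 (i + 1)) y) * (coord i y - coord (m3 (i + 2)) y)
     / phi a b c d (coord i y)).
Proof. unfold gmet; rewrite Nat.eqb_refl; reflexivity. Qed.

Variable y : pt.
Hypothesis y_regular : regular_point p a b c d y.

Lemma coord_neq0 m : (m < 3)%nat -> coord m y <> 0.
Proof.
  destruct y_regular as [Hvol _]; unfold vol in Hvol; intros Hm Hc.
  destruct m as [|[|[|m]]]; try lia; rewrite Hc in Hvol; lra.
Qed.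

Lemma coord_sub_neq0 i k : (i < 3)%nat -> (k = 1 \/ k = 2)%nat ->
  coord i y - coord (m3 (i + k)) y <> 0.
Proof.
  destruct y_regular as (_ & _ & _ & H01 & H02 & H12); intros Hi Hk.
  apply Rminus_eq_contra.
  destruct i as [|[|[|i]]], Hk as [-> | ->]; try lia; cbn; auto.
Qed.

Lemma gmet_diag_neq0 i : (i < 3)%nat -> gmet p a b c d i i y <> 0.
Proof.
  intros Hi; rewrite gmet_diagE.
  destruct y_regular as (_ & HQ & Hphi & _).
  apply Rmult_integral_contrapositive_currified.
  - apply Rinv_neq_0_compat, pow_nonzero; exact HQ.
  - unfold Rdiv; repeat apply Rmult_integral_contrapositive_currified.
    1-2: apply coord_sub_neq0; auto.
    apply Rinv_neq_0_compat, Hphi; exact Hi.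
Qed.

Lemma is_derive_gmet m i : (m < 3)%nat -> (i < 3)%nat ->
  is_derive (fun t => gmet p a b c d i i (upd m y t)) (coord m y) (dgmet m i y).
Proof.
  intros Hm Hi.
  destruct y_regular as (Hvol & HQ & Hphi & _).
  pose proof (is_derive_conformal_entry _ _ _ _ _ p _ _ _ _ _ _
    (is_derive_phi a b c d _) (is_derive_sqrtvol m y Hm Hvol)
    (is_derive_coord_upd i m y Hi Hm)
    (is_derive_coord_upd (m3 (i + 1)) m y ltac:(apply Nat.mod_upper_bound; lia) Hm)
    (is_derive_coord_upd (m3 (i + 2)) m y ltac:(apply Nat.mod_upper_bound; lia) Hm)) as D.
  cbv beta in D; rewrite !upd_coord in D by assumption.
  apply (is_derive_ext _ _ _ _ (fun t => eq_sym (gmet_diagE i (upd m y t)))).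
  eapply is_derive_eq; [apply D; auto using coord_sub_neq0|].
  unfold dgmet, dlog_gmet, dlog_conf, dlog_diff, dlog_phi; rewrite gmet_diagE.
  field; repeat split; auto using coord_neq0, coord_sub_neq0, pow_nonzero.
Qed.

Lemma is_derive_dlog_gmet m n i : (m < 3)%nat -> (n < 3)%nat -> (i < 3)%nat ->
  is_derive (fun t => dlog_gmet n i (upd m y t)) (coord m y) (ddlog_gmet m n i y).
Proof.
  intros Hm Hn Hi.
  destruct y_regular as (Hvol & HQ & Hphi & _).
  assert (Hi1 : (m3 (i + 1) < 3)%nat) by (apply Nat.mod_upper_bound; lia).
  assert (Hi2 : (m3 (i + 2) < 3)%nat) by (apply Nat.mod_upper_bound; lia).
  pose proof (is_derive_sqrtvol m y Hm Hvol) as DS.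
  pose proof (is_derive_coord_upd i m y Hi Hm) as DXi.
  pose proof (is_derive_conformal_dlog _ _ p _ _ _ DS (is_derive_coord_upd n m y Hn Hm))
    as D1.
  pose proof (is_derive_inv_diff _ _ (kdelta i n - kdelta (m3 (i + 1)) n) _ _ _
    DXi (is_derive_coord_upd _ m y Hi1 Hm)) as D2.
  pose proof (is_derive_inv_diff _ _ (kdelta i n - kdelta (m3 (i + 2)) n) _ _ _
    DXi (is_derive_coord_upd _ m y Hi2 Hm)) as D3.
  pose proof (is_derive_ratio_comp _ _ _ _ _ _ _
    (is_derive_phi a b c d _) (is_derive_phi' a b c d _) DXi) as D4.
  cbv beta in D1, D2, D3, D4; rewrite !upd_coord in D1, D2, D3, D4 by assumption.
  unfold dlog_gmet, dlog_conf, dlog_diff, dlog_phi.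
  eapply is_derive_eq.
  { apply (is_derive_minus (V := R_NormedModule));
      [apply (is_derive_plus (V := R_NormedModule));
        [|apply (is_derive_plus (V := R_NormedModule))]|apply is_derive_scal].
    - apply D1; auto using coord_neq0.
    - apply D2; auto using coord_sub_neq0.
    - apply D3; auto using coord_sub_neq0.
    - apply D4; auto. }
  unfold minus, plus, opp; simpl.
  unfold ddlog_gmet, ddlog_conf, ddlog_diff, ddlog_phi, dlog_phi.
  field; repeat split; auto using coord_neq0, coord_sub_neq0.
Qed.

Lemma is_derive_dgmet m n i : (m < 3)%nat -> (n < 3)%nat -> (i < 3)%nat ->
  is_derive (fun t => dgmet n i (upd m y t)) (coord m y) (ddgmet m n i y).
Proof.
  intros Hm Hn Hi.
  eapply is_derive_eq.
  - apply (is_derive_mult (K := R_AbsRing));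
      [apply is_derive_gmet | apply is_derive_dlog_gmet | intros; apply Rmult_comm];
      assumption.
  - unfold mult, plus; simpl; unfold ddgmet, dgmet.
    rewrite upd_coord by assumption; ring.
Qed.

End Metric.

Lemma ricci_gmetE p a b c d U x i j : admissible p a b c d U -> U x ->
  (i < 3)%nat -> (j < 3)%nat ->
  ricci (gmet p a b c d) i j x
  = ricci_diag (gmet p a b c d) (dgmet p a b c d) (ddgmet p a b c d) i j x.
Proof.
  intros HA Hx Hi Hj.
  apply (ricci_diagE _ _ _ U); try assumption.
  - exact (proj1 HA).
  - intros k l z Hkl; unfold gmet; apply Nat.eqb_neq in Hkl; rewrite Hkl; reflexivity.
  - intros z Hz k Hk; apply gmet_diag_neq0;
      try apply (admissible_regular _ _ _ _ _ U); assumption.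
  - intros z Hz m k Hm Hk; apply is_derive_gmet;
      try apply (admissible_regular _ _ _ _ _ U); assumption.
  - intros z Hz m n k Hm Hn Hk; apply is_derive_dgmet;
      try apply (admissible_regular _ _ _ _ _ U); assumption.
Qed.

(** * The Ricci components as rational functions *)

Lemma regular_point_uvw p a b c d u v w : regular_point p a b c d (u, v, w) ->
  u <> 0 /\ v <> 0 /\ w <> 0 /\ 1 + p * sqrt (u * v * w) <> 0 /\
  phi a b c d u <> 0 /\ phi a b c d v <> 0 /\ phi a b c d w <> 0 /\
  u - v <> 0 /\ v - u <> 0 /\ u - w <> 0 /\ w - u <> 0 /\ v - w <> 0 /\ w - v <> 0.
Proof.
  intros (Hvol & HQ & Hphi & H01 & H02 & H12); unfold sqrtvol, vol in *; cbn in *.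
  pose proof (Hphi 0%nat ltac:(lia)); pose proof (Hphi 1%nat ltac:(lia));
  pose proof (Hphi 2%nat ltac:(lia)).
  repeat split; try assumption; try (apply Rminus_eq_contra; congruence);
    intros ->; lra.
Qed.

Ltac expand_ricci_gmet :=
  unfold ricci_diag, christoffel_diag_deriv, christoffel_diag, christoffel_num, sum3,
    ddgmet, dgmet, ddlog_gmet, dlog_gmet, ddlog_conf, ddlog_diff, ddlog_phi,
    dlog_conf, dlog_diff, dlog_phi, gmet, confactor, sqrtvol, vol, kdelta, m3;
  cbn [Nat.eqb Nat.modulo Nat.add coord fst snd Nat.divmod Nat.sub].

(* After expansion the goal is a rational identity in u, v, w, T = p sqrt(uvw) and
   the values of phi, phi', phi'' at u, v, w, all of which may be treated as
   independent variables. *)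
Lemma ricci_diag_gmet_offdiag p a b c d y i j :
  regular_point p a b c d y -> (i < 3)%nat -> (j < 3)%nat -> i <> j ->
  ricci_diag (gmet p a b c d) (dgmet p a b c d) (ddgmet p a b c d) i j y = 0.
Proof.
  intros Hy Hi Hj Hij; destruct y as [[u v] w].
  destruct (regular_point_uvw _ _ _ _ _ _ _ _ Hy) as (Hu & Hv & Hw & HQ & F0 & F1 & F2 & D).
  destruct i as [|[|[|i]]], j as [|[|[|j]]]; try lia; expand_ricci_gmet;
    generalize (phi' a b c d u) (phi' a b c d v) (phi' a b c d w)
      (phi'' a b c d u) (phi'' a b c d v) (phi'' a b c d w);
    revert HQ F0 F1 F2; generalize (p * sqrt (u * v * w)) (phi a b c d u)
      (phi a b c d v) (phi a b c d w); intros;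
    field; intuition.
Qed.

Definition e3 (a b c d : R) : R := a * b * c + a * b * d + a * c * d + b * c * d.
Definition e4 (a b c d : R) : R := a * b * c * d.

Definition newton_alpha a b c d t0 t1 : R :=
  (phi a b c d t1 - phi a b c d t0 - phi' a b c d t0 * (t1 - t0)) / (t1 - t0) ^ 2.

Definition newton_beta a b c d t0 t1 t2 : R :=
  (phi a b c d t2 - phi a b c d t0 - phi' a b c d t0 * (t2 - t0)
   - newton_alpha a b c d t0 t1 * (t2 - t0) ^ 2) / ((t2 - t0) ^ 2 * (t2 - t1)).

(* newton_alpha and newton_beta are the divided differences phi[t0,t0,t1] and
   phi[t0,t0,t1,t2], so that
     phi t = phi t0 + phi' t0 (t - t0) + alpha (t - t0)^2 + beta (t - t0)^2 (t - t1)
             + (t - t0)^2 (t - t1) (t - t2).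
   Each equation below is read off from this Newton form of the monic quartic phi. *)
Lemma phi_newton a b c d t0 t1 t2 : t0 - t1 <> 0 -> t0 - t2 <> 0 -> t1 - t2 <> 0 ->
  let al := newton_alpha a b c d t0 t1 in let be := newton_beta a b c d t0 t1 t2 in
  let D0 := phi' a b c d t0 in
  phi' a b c d t1 = (t1 - t0) ^ 2 * (t1 - t2) + D0 + 2 * al * (t1 - t0) + be * (t1 - t0) ^ 2 /\
  phi' a b c d t2 = (t2 - t0) ^ 2 * (t2 - t1) + D0 + 2 * al * (t2 - t0)
                    + be * (2 * (t2 - t0) * (t2 - t1) + (t2 - t0) ^ 2) /\
  phi'' a b c d t0 = 2 * (t0 - t1) * (t0 - t2) + 2 * al + 2 * be * (t0 - t1) /\
  e4 a b c d = t0 ^ 2 * t1 * t2 + phi a b c d t0 - D0 * t0 + al * t0 ^ 2 - be * t0 ^ 2 * t1 /\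
  e3 a b c d = 2 * t0 * t1 * t2 + t0 ^ 2 * (t1 + t2) - D0 + 2 * al * t0
               - be * (2 * t0 * t1 + t0 ^ 2).
Proof.
  intros H01 H02 H12; cbv zeta.
  unfold newton_beta, newton_alpha, phi, phi', phi'', e3, e4.
  repeat split; field; repeat split; intro; lra.
Qed.

Definition ricci_ratio p a b c d (i : nat) (y : pt) : R :=
  (p ^ 2 * e3 a b c d - 1) / 2 - e4 a b c d * (p * sqrtvol y) *
   ((1 + p * sqrtvol y) / (4 * vol y * coord i y)
    + (1 + 3 * (p * sqrtvol y)) / (4 * vol y)
      * (1 / coord 0 y + 1 / coord 1 y + 1 / coord 2 y)).

Lemma sqr_mul_sqrt p V : 0 < V -> p ^ 2 = (p * sqrt V) ^ 2 / V.
Proof.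
  intros HV; rewrite Rpow_mult_distr, <- Rsqr_pow2 with (x := sqrt V), Rsqr_sqrt by lra.
  field; lra.
Qed.

(* As in the off-diagonal case, except that phi' and phi'' at the nodes and e3, e4
   are first eliminated through phi_newton: this is the only place where the
   identity uses that phi is a monic quartic. *)
Lemma ricci_diag_gmet_diag p a b c d y i :
  regular_point p a b c d y -> (i < 3)%nat ->
  ricci_diag (gmet p a b c d) (dgmet p a b c d) (ddgmet p a b c d) i i y =
  gmet p a b c d i i y * ricci_ratio p a b c d i y.
Proof.
  intros Hy Hi; destruct y as [[u v] w].
  pose proof (proj1 Hy) as Hvol; unfold vol in Hvol; cbn in Hvol.
  destruct (regular_point_uvw _ _ _ _ _ _ _ _ Hy)
    as (Hu & Hv & Hw & HQ & F0 & F1 & F2 & Duv & Dvu & Duw & Dwu & Dvw & Dwv).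
  destruct i as [|[|[|i]]]; try lia;
    [ destruct (phi_newton a b c d u v w) as (E1 & E2 & E3 & E4 & E5)
    | destruct (phi_newton a b c d v u w) as (E1 & E2 & E3 & E4 & E5)
    | destruct (phi_newton a b c d w u v) as (E1 & E2 & E3 & E4 & E5) ];
    try assumption;
    unfold ricci_ratio; expand_ricci_gmet;
    rewrite (sqr_mul_sqrt p (u * v * w)) by assumption;
    rewrite E1, E2, E3, E4, E5; clear E1 E2 E3 E4 E5;
    unfold newton_beta, newton_alpha;
    generalize (phi' a b c d u) (phi' a b c d v) (phi' a b c d w)
      (phi'' a b c d u) (phi'' a b c d v) (phi'' a b c d w);
    revert HQ F0 F1 F2; generalize (p * sqrt (u * v * w)) (phi a b c d u)
      (phi a b c d v) (phi a b c d w); intros;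
    field; intuition.
Qed.

Lemma ricci_ratio_vanish p a b c d i y :
  p * e4 a b c d = 0 -> p ^ 2 * e3 a b c d = 1 -> ricci_ratio p a b c d i y = 0.
Proof.
  intros H4 H3; unfold ricci_ratio.
  replace (e4 a b c d * (p * sqrtvol y)) with (p * e4 a b c d * sqrtvol y) by ring.
  rewrite H4, H3; lra.
Qed.

Lemma ricci_ratio_vanish_inv p a b c d y : regular_point p a b c d y ->
  ricci_ratio p a b c d 0 y = 0 -> ricci_ratio p a b c d 1 y = 0 ->
  p * e4 a b c d = 0 /\ p ^ 2 * e3 a b c d = 1.
Proof.
  intros Hy R0 R1; destruct y as [[u v] w].
  pose proof (proj1 Hy) as Hvol; unfold vol in Hvol; cbn in Hvol.
  destruct (regular_point_uvw _ _ _ _ _ _ _ _ Hy) as (Hu & Hv & Hw & HQ & _ & _ & _ & Duv & _).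
  assert (HS : 0 < sqrt (u * v * w)) by (apply sqrt_lt_R0; exact Hvol).
  assert (Hdiff : p * e4 a b c d *
      (sqrt (u * v * w) * (1 + p * sqrt (u * v * w)) * (u - v) / (4 * (u * v * w) * u * v))
      = ricci_ratio p a b c d 0 (u, v, w) - ricci_ratio p a b c d 1 (u, v, w)).
  { unfold ricci_ratio, sqrtvol, vol; cbn [coord fst snd]; field; auto. }
  rewrite R0, R1, Rminus_0_r in Hdiff.
  assert (H4 : p * e4 a b c d = 0).
  { apply Rmult_integral in Hdiff as [H4 | Hc]; [exact H4|].
    exfalso; revert Hc; unfold Rdiv.
    repeat apply Rmult_integral_contrapositive_currified; try apply Rinv_neq_0_compat;
      repeat apply Rmult_integral_contrapositive_currified; auto; lra. }
  split; [exact H4|].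
  unfold ricci_ratio in R0.
  replace (e4 a b c d * (p * sqrtvol (u, v, w))) with (p * e4 a b c d * sqrtvol (u, v, w))
    in R0 by ring.
  rewrite H4 in R0; lra.
Qed.

Theorem proposition3 (p a b c d : R) (U : pt -> Prop) :
  admissible p a b c d U ->
  (forall i j : nat, (i < 3)%nat -> (j < 3)%nat -> i <> j ->
     forall x, U x -> ricci (gmet p a b c d) i j x = 0) /\
  ((forall i : nat, (i < 3)%nat ->
     forall x, U x -> ricci (gmet p a b c d) i i x = 0) <->
   (p * (a * b * c * d) = 0 /\
    p ^ 2 * (a * b * c + a * b * d + a * c * d + b * c * d) = 1)).
Proof.
  intros HA.
  assert (Hdiag : forall i x, (i < 3)%nat -> U x ->
      ricci (gmet p a b c d) i i x = gmet p a b c d i i x * ricci_ratio p a b c d i x).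
  { intros i x Hi Hx; rewrite (ricci_gmetE _ _ _ _ _ U) by assumption.
    apply ricci_diag_gmet_diag; try apply (admissible_regular _ _ _ _ _ U); assumption. }
  split; [|split].
  - intros i j Hi Hj Hij x Hx; rewrite (ricci_gmetE _ _ _ _ _ U) by assumption.
    apply ricci_diag_gmet_offdiag; try apply (admissible_regular _ _ _ _ _ U); assumption.
  - intros Hric; destruct HA as (_ & [x Hx] & Hreg).
    assert (Hx_reg : regular_point p a b c d x) by exact (Hreg x Hx).
    assert (Hratio : forall i, (i < 3)%nat -> ricci_ratio p a b c d i x = 0).
    { intros i Hi; pose proof (Hric i Hi x Hx) as H0; rewrite Hdiag in H0 by assumption.
      apply Rmult_integral in H0 as [Hg | Hr]; [|exact Hr].
      exfalso; exact (gmet_diag_neq0 _ _ _ _ _ _ Hx_reg i Hi Hg). }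
    apply (ricci_ratio_vanish_inv _ _ _ _ _ x); auto.
  - intros [H4 H3] i Hi x Hx; rewrite Hdiag by assumption.
    rewrite ricci_ratio_vanish by assumption; ring.
Qed.
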